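(* Let $(\Gamma,d)=(H,\iota,\sigma,m,d)$ be a $\mathbb{Z}/2\mathbb{Z}$-graded skew Brauer graph and $H'\subseteq H$ stable under $\iota$. Let $\Gamma_d=(H_d,\iota_d,\sigma_d,m_d)$ be the covering of $(\Gamma,d)$ and $H'_d=H'\times\mathbb{Z}/2\mathbb{Z}\subseteq H_d$. Then the covering of the graded skew Brauer graph $\mu^+_{H'}(\Gamma,d)$ is the Brauer graph $\mu^+_{H'_d}(\Gamma_d)$.
   Context: A skew Brauer graph is $\Gamma=(H,\iota,\sigma,m)$ with $H$ finite, $\iota$ an involution (possibly with fixed points; $H_\times$ = fixed points, $H_\circ$ = the rest), $\sigma$ a permutation, $m:H\to\mathbb{Z}_{>0}$ constant on $\sigma$-orbits; no half-edge is fixed by both $\iota$ and $\sigma$. A Brauer graph is a skew Brauer graph with $H_\times=\varnothing$. A grading $d:H\to\mathbb{Z}/2\mathbb{Z}$ is $0$-homogeneous if its sum over each $\sigma$-orbit is $0$; then $(\Gamma,d)$ is a graded skew Brauer graph. Its covering is the Brauer graph $\Gamma_d$ with $H_d=H\times\mathbb{Z}/2\mathbb{Z}$ (elements $h_i$), $\iota_d(h_i)=h_{i+1}$ if $h\in H_\times$ and $(\iota h)_i$ if $h\in H_\circ$, $\sigma_d(h_i)=(\sigma h)_{i+d(h)}$, $m_d(h_i)=m(h)$. Sectors and moves: for $H'$ stable under $\iota$, $(h,r)\in H\times\mathbb{Z}_{\ge0}$ is a sector of elements of $H'$ if $r+1$ is the least $r'\ge0$ with $\sigma^{r'}h\notin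 H'$, maximal if moreover $\sigma^{-1}h\notin H'$. The move of a sector gives $\sigma_{(h,r)}=(h\ \ \sigma^{r+1}h)\circ\sigma\circ(\sigma^rh\ \ \iota\sigma^{r+1}h)$ (applied right to left), $m_{(h,r)}(\sigma^ih)=m(\iota\sigma^{r+1}h)$ for $0\le i\le r$, $m_{(h,r)}=m$ elsewhere; in the graded version also $d_{(h,r)}$, defined with $\epsilon=0$ if $\sigma^{r+1}h\in H_\circ$, $\epsilon=1$ if $\sigma^{r+1}h\in H_\times$: $d_{(h,r)}(\iota\sigma^{r+1}h)=-\sum_{i=0}^rd(\sigma^ih)-\epsilon$; $d_{(h,r)}(\sigma^rh)=d(\iota\sigma^{r+1}h)+d(\sigma^rh)+\epsilon$ if $\iota\sigma^{r+1}h\neq\sigma^{-1}h$, else $\sum_{i=-1}^rd(\sigma^ih)+d(\sigma^rh)+\epsilon$; $d_{(h,r)}(\sigma^{-1}h)=\sum_{i=-1}^rd(\sigma^ih)$ if $\iota\sigma^{r+1}h\ne\sigma^{-1}h$, else $d_{(h,r)}(\iota\sigma^{r+1}h)$; $d_{(h,r)}=d$ elsewhere. The (graded) generalized Kauer move $\mu^+_{H'}$ applies successively the (graded) moves of all maximal sectors of elements of $H'$ (independent of order). The covering of $\mu^+_{H'}(\Gamma,d)$ is formed with respect to its grading $d_{H'}$. *)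

From HB Require Import structures.
From mathcomp Require Import all_boot all_order all_algebra all_fingroup.
Set Implicit Arguments. Unset Strict Implicit. Unset Printing Implicit Defensive.
Import GRing.Theory.

(* Half-edges form a finite type H; iota : H -> H, sigma : {perm H},
   m : H -> nat, grading d : H -> 'Z_2.  H_x = fixed points of iota. *)

Section Defs.
Variable H : finType.

Local Open Scope ring_scope.

Definition skew_brauer (iota : H -> H) (sigma : {perm H}) (m : H -> nat) : Prop :=
  involutive iota /\
  (forall h, (0 < m h)%N) /\
  (forall h x, x \in porbit sigma h -> m x = m h) /\
  (forall h, ~ (iota h = h /\ sigma h = h)).

Definition zero_homogeneous (sigma : {perm H}) (d : H -> 'Z_2) : Prop :=
  forall h, \sum_(x in porbit sigma h) d x = 0.

Definition graded_skew_brauer iota sigma m d : Prop :=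
  skew_brauer iota sigma m /\ zero_homogeneous sigma d.

Definition iota_stable (iota : H -> H) (Hp : {set H}) : Prop :=
  forall h, h \in Hp -> iota h \in Hp.

Definition is_sector (sigma : {perm H}) (Hp : {set H}) (h : H) (r : nat) : bool :=
  [forall i : 'I_r.+1, (sigma ^+ i)%g h \in Hp] && ((sigma ^+ r.+1)%g h \notin Hp).

Definition is_max_sector sigma Hp h r : bool :=
  is_sector sigma Hp h r && ((sigma^-1)%g h \notin Hp).

(* All maximal sectors, in the canonical enumeration order.  Any sector
   (h, r) satisfies r < #|H| (h, ..., sigma^r h are distinct). *)
Definition max_sectors (sigma : {perm H}) (Hp : {set H}) : seq (H * nat) :=
  [seq (hr.1, val hr.2) |
     hr <- enum [pred hr : H * 'I_#|H| | is_max_sector sigma Hp hr.1 hr.2]].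

Definition move_sigma (iota : H -> H) (sigma : {perm H}) (h : H) (r : nat)
  : {perm H} :=
  (* (h  sigma^{r+1} h) o sigma o (sigma^r h  iota sigma^{r+1} h), right to left;
     in mathcomp, (s * t) x = t (s x). *)
  (tperm ((sigma ^+ r)%g h) (iota ((sigma ^+ r.+1)%g h)) * sigma
     * tperm h ((sigma ^+ r.+1)%g h))%g.

Definition move_m (iota : H -> H) (sigma : {perm H}) (m : H -> nat)
  (h : H) (r : nat) : H -> nat :=
  fun x => if [exists i : 'I_r.+1, x == (sigma ^+ i)%g h]
           then m (iota ((sigma ^+ r.+1)%g h)) else m x.

Definition move_d (iota : H -> H) (sigma : {perm H}) (d : H -> 'Z_2)
  (h : H) (r : nat) : H -> 'Z_2 :=
  let a := (sigma ^+ r.+1)%g h in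
  let b := iota a in
  let last := (sigma ^+ r)%g h in
  let prev := (sigma^-1)%g h in
  let eps : 'Z_2 := if iota a == a then 1 else 0 in
  let sumd := \sum_(i < r.+1) d ((sigma ^+ i)%g h) in
  let db := - sumd - eps in
  fun x =>
    if x == b then db
    else if x == last then
      (if b != prev then d b + d last + eps
       else (d prev + sumd) + d last + eps)
    else if x == prev then
      (if b != prev then d prev + sumd else db)
    else d x.

Definition kauer (iota : H -> H) (Hp : {set H}) (sigma : {perm H}) (m : H -> nat)
  : {perm H} * (H -> nat) :=
  foldl (fun st hr =>
           (move_sigma iota st.1 hr.1 hr.2, move_m iota st.1 st.2 hr.1 hr.2))
        (sigma, m) (max_sectors sigma Hp).

Definition gkauer (iota : H -> H) (Hp : {set H}) (sigma : {perm H}) (m : H -> nat)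
  (d : H -> 'Z_2) : {perm H} * (H -> nat) * (H -> 'Z_2) :=
  foldl (fun st hr =>
           (move_sigma iota st.1.1 hr.1 hr.2,
            move_m iota st.1.1 st.1.2 hr.1 hr.2,
            move_d iota st.1.1 st.2 hr.1 hr.2))
        (sigma, m, d) (max_sectors sigma Hp).

End Defs.

Section Cover.
Variable H : finType.
Local Open Scope ring_scope.

Definition cover_iota (iota : H -> H) (x : H * 'Z_2) : H * 'Z_2 :=
  if iota x.1 == x.1 then (x.1, x.2 + 1) else (iota x.1, x.2).

Definition cover_sigma_fun (sigma : {perm H}) (d : H -> 'Z_2) (x : H * 'Z_2)
  : H * 'Z_2 := (sigma x.1, x.2 + d x.1).

Lemma cover_sigma_inj sigma d : injective (cover_sigma_fun sigma d).
Proof.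
move=> [h i] [h' i'] /eqP; rewrite /cover_sigma_fun /= xpair_eqE.
move=> /andP[/eqP/perm_inj eh /eqP]; subst h' => e.
by rewrite -(addrK (d h) i) e addrK.
Qed.

Definition cover_sigma sigma d : {perm H * 'Z_2} := perm (@cover_sigma_inj sigma d).

Definition cover_m (m : H -> nat) (x : H * 'Z_2) : nat := m x.1.

Definition cover_set (Hp : {set H}) : {set H * 'Z_2} := setX Hp [set: 'Z_2].

End Cover.

(* Lifting to the covering doubles everything: the lifts of a maximal sector (h, r)
   of elements of H' are exactly the two maximal sectors ((h,0), r) and ((h,1), r) of
   H'_d, and they are enumerated consecutively.  The two corresponding moves of the
   covering touch disjoint lifts, so the second one sees the sector of (h,1) unchanged.
   Their transpositions pair up fibrewise: the pair (u,j) <-> (v,j+c), (u,k) <-> (v,k+c)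
   (j <> k) is the lift of the transposition u <-> v with shift c on {u, v}.  Since
   lifting is a homomorphism (shifts compose as a cocycle), the composite of the two
   covering moves is the lift of the graded move, and the resulting shift is exactly the
   grading d_(h,r); the multiplicities agree fibrewise.  Distinct maximal sectors are
   disjoint, so each move leaves the permutation unchanged along the sectors still to be
   moved, and the argument iterates along the generalized Kauer move. *)

From mathcomp Require Import all_boot all_order all_algebra all_fingroup zify.
Set Implicit Arguments. Unset Strict Implicit. Unset Printing Implicit Defensive.
Import GRing.Theory.

Lemma enum_prod (T1 T2 : finType) : enum {: T1 * T2} = prod_enum T1 T2.
Proof. by rewrite [LHS]enumT unlock. Qed.

Lemma pair_neq1 (T1 T2 : eqType) (x y : T1) (j k : T2) : x != y -> (x, j) != (y, k).
Proof. by move=> neq_xy; rewrite xpair_eqE negb_and neq_xy. Qed.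

Lemma pair_neq2 (T1 T2 : eqType) (x y : T1) (j k : T2) : j != k -> (x, j) != (y, k).
Proof. by move=> neq_jk; rewrite xpair_eqE negb_and neq_jk orbT. Qed.

Lemma Z2_cases (x : 'Z_2) : x = 0%R \/ x = 1%R.
Proof. by case: x => -[|[|//]] ?; [left | right]; apply/val_inj. Qed.

Ltac case_Z2 x := have [->|->] := Z2_cases x.

Section Z2.
Local Open Scope ring_scope.

Lemma enum_Z2 : enum 'Z_2 = [:: 0; 1].
Proof. by apply: (inj_map val_inj); rewrite val_enum_ord. Qed.

Lemma Z2_dichotomy (i j k : 'Z_2) : j != k -> i = j \/ i = k.
Proof. by case_Z2 i; case_Z2 j; case_Z2 k; auto. Qed.

Lemma Z2_addrK (i j : 'Z_2) : i + j + j = i.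
Proof. by case_Z2 i; case_Z2 j; apply/val_inj. Qed.

Lemma Z2_shift_neq (c : 'Z_2) : 1 + c != 0 + c.
Proof. by rewrite (inj_eq (addIr c)). Qed.

Lemma exists_fibres (T : finType) n (f : 'I_n -> T) (g : 'I_n -> 'Z_2) x j :
  [exists i, (x, j) == (f i, 1 + g i)] || [exists i, (x, j) == (f i, 0 + g i)] =
  [exists i, x == f i].
Proof.
apply/orP/existsP => [[] /existsP[i /eqP[-> _]] | [i /eqP ->]]; try by exists i.
case: (Z2_dichotomy j (Z2_shift_neq (g i))) => ->; [left | right].
  by apply/existsP; exists i.
by apply/existsP; exists i.
Qed.

End Z2.

Section Sectors.
Variables (T : finType) (s : {perm T}) (P : {set T}).

Lemma is_sectorP h r :
  reflect ((forall i, i <= r -> iter i s h \in P) /\ iter r.+1 s h \notin P)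
          (is_sector s P h r).
Proof.
rewrite /is_sector permX; apply: (iffP andP) => -[inP outP]; split=> //.
  by move=> i le_ir; have := forallP inP (Ordinal (le_ir : i < r.+1)); rewrite permX.
by apply/forallP => i; rewrite permX inP // -ltnS.
Qed.

Lemma is_max_sectorP h r :
  reflect [/\ forall i, i <= r -> iter i s h \in P, iter r.+1 s h \notin P
            & (s^-1)%g h \notin P]
          (is_max_sector s P h r).
Proof.
by apply: (iffP andP) => [[/is_sectorP[]]|[inP outP]] // ; split=> //; apply/is_sectorP.
Qed.

Lemma sector_iter_inj h r :
  (forall i, i <= r -> iter i s h \in P) -> iter r.+1 s h \notin P ->
  {in [pred i | i <= r.+1] &, injective (fun i => iter i s h)}.
Proof.
move=> inP outP.
suff lt_neq i j : i < j -> j <= r.+1 -> iter i s h != iter j s h.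
  move=> i j /[!inE] le_i le_j eq_ij.
  case: (ltngtP i j) => // [lt_ij | lt_ji].
    by move: (lt_neq i j lt_ij le_j); rewrite eq_ij eqxx.
  by move: (lt_neq j i lt_ji le_i); rewrite eq_ij eqxx.
move=> lt_ij le_j; apply/eqP => eq_ij.
have period : iter (j - i) s h = h.
  by apply: (@perm_inj _ (s ^+ i)%g); rewrite !permX -iterD subnKC 1?ltnW.
have le_r : r.+1 - (j - i) <= r by lia.
move: outP; rewrite -(subnK (_ : j - i <= r.+1)); last by lia.
by rewrite iterD period inP.
Qed.

Lemma sector_len_unique h r r' :
  is_sector s P h r -> is_sector s P h r' -> r = r'.
Proof.
move=> /is_sectorP[inP outP] /is_sectorP[inP' outP'].
case: (ltngtP r r') => // [lt_rr' | lt_r'r].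
  by move: outP; rewrite inP'.
by move: outP'; rewrite inP.
Qed.

Lemma sector_len_lt_card h r : is_sector s P h r -> r < #|T|.
Proof.
case/is_sectorP=> inP outP.
have inj : injective (fun i : 'I_r.+1 => iter i s h).
  move=> i j eq_ij; apply/val_inj/(sector_iter_inj inP outP) => //.
    exact: ltnW (ltn_ord i).
  exact: ltnW (ltn_ord j).
by have := leq_card _ inj; rewrite card_ord.
Qed.

Lemma max_sectors_meet h1 r1 h2 r2 i1 i2 :
  is_max_sector s P h1 r1 -> is_max_sector s P h2 r2 ->
  i1 <= r1 -> i2 <= r2 -> iter i1 s h1 = iter i2 s h2 -> h1 = h2 /\ r1 = r2.
Proof.
wlog le_i12 : h1 r1 h2 r2 i1 i2 / i1 <= i2.
  move=> W max1 max2 le1 le2 eq12; case: (leqP i1 i2) => [|/ltnW] le.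
    exact: (W h1 r1 h2 r2 i1 i2).
  by case: (W h2 r2 h1 r1 i2 i1).
move=> max1 max2 le1 le2 eq12.
have h1E : h1 = iter (i2 - i1) s h2.
  by apply: (@perm_inj _ (s ^+ i1)%g); rewrite !permX -iterD subnKC.
suff eq_h : h1 = h2.
  subst h2; split=> //.
  by case/andP: max1 => sec1 _; case/andP: max2 => sec2 _; apply: sector_len_unique sec1 sec2.
case/is_max_sectorP: max1 => _ _; case/is_max_sectorP: max2 => inP2 _ _.
move: h1E (leq_subr i1 i2); case: (i2 - i1) => [//|k] -> le_k.
by rewrite iterS permK inP2 //; lia.
Qed.

Definition max_sector_lens (h : T) : seq nat :=
  [seq r <- iota 0 #|T| | is_max_sector s P h r].

Lemma max_sectorsE :
  max_sectors s P =
  flatten [seq [seq (h, r) | r <- max_sector_lens h] | h <- enum T].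
Proof.
rewrite /max_sectors {1}/enum_mem -enumT enum_prod /prod_enum.
elim: (enum T) => //= h hs IHhs; rewrite filter_cat map_cat IHhs; congr (_ ++ _).
by rewrite filter_map -map_comp /max_sector_lens -val_enum_ord filter_map -map_comp.
Qed.

Lemma size_max_sector_lens h : size (max_sector_lens h) <= 1.
Proof.
have : uniq (max_sector_lens h) by rewrite filter_uniq ?iota_uniq.
have : all (is_max_sector s P h) (max_sector_lens h) by apply: filter_all.
case: max_sector_lens => [|r1 [|r2 rs]] //= /and3P[/andP[sec1 _] /andP[sec2 _] _].
by rewrite inE (sector_len_unique sec1 sec2) eqxx.
Qed.

Lemma mem_max_sectors hr : hr \in max_sectors s P -> is_max_sector s P hr.1 hr.2.
Proof. by case/mapP=> -[h i]; rewrite mem_enum => max_hi ->. Qed.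

Lemma max_sectors_uniq : uniq (max_sectors s P).
Proof.
rewrite map_inj_uniq ?enum_uniq // => -[h1 i1] [h2 i2] /= [-> eq_i].
by rewrite (val_inj eq_i).
Qed.

End Sectors.

Lemma iota_stable_notin (T : finType) (io : T -> T) (P : {set T}) x :
  involutive io -> iota_stable io P -> x \notin P -> io x \notin P.
Proof. by move=> ioK ioP; apply: contra => /ioP; rewrite ioK. Qed.

Section Moves.
Variables (T : finType) (io : T -> T).
Implicit Types (s : {perm T}) (m : T -> nat).

Lemma move_sigmaE s h r :
  move_sigma io s h r =
  (tperm (iter r s h) (io (iter r.+1 s h)) * s * tperm h (iter r.+1 s h))%g.
Proof. by rewrite /move_sigma !permX. Qed.

Lemma move_sigma_id s h r x :
  x != iter r s h -> x != io (iter r.+1 s h) ->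
  s x != h -> s x != iter r.+1 s h -> move_sigma io s h r x = s x.
Proof. by move=> *; rewrite move_sigmaE !permM !tpermD // eq_sym. Qed.

Lemma move_mE s m h r x :
  move_m io s m h r x =
  if [exists i : 'I_r.+1, x == iter i s h] then m (io (iter r.+1 s h)) else m x.
Proof.
rewrite /move_m permX; congr (if _ then _ else _).
by apply: eq_existsb => i; rewrite permX.
Qed.

Lemma eq_move_m s m1 m2 h r :
  m1 =1 m2 -> move_m io s m1 h r =1 move_m io s m2 h r.
Proof. by move=> eq_m x; rewrite !move_mE !eq_m. Qed.

End Moves.

Definition fibre_sectors {T : finType} (hr : T * nat) : seq ((T * 'Z_2) * nat) :=
  [:: ((hr.1, 0%R), hr.2); ((hr.1, 1%R), hr.2)].

Section Cover.
Variable T : finType.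
Local Open Scope ring_scope.
Implicit Types (s t : {perm T}) (d e : T -> 'Z_2) (P : {set T}).

Lemma cover_mE (m : T -> nat) h j : cover_m m (h, j) = m h.
Proof. by []. Qed.

Lemma cover_sigmaE s d h j : cover_sigma s d (h, j) = (s h, j + d h).
Proof. by rewrite permE. Qed.

Lemma eq_cover_sigma s d e : d =1 e -> cover_sigma s d = cover_sigma s e.
Proof. by move=> de; apply/permP => -[h j]; rewrite !cover_sigmaE de. Qed.

Lemma cover_sigmaM s t d e :
  (cover_sigma s d * cover_sigma t e)%g =
  cover_sigma (s * t)%g (fun x => d x + e (s x)).
Proof. by apply/permP => -[h j]; rewrite permM !cover_sigmaE permM addrA. Qed.

Lemma iter_cover_sigma s d n h j :
  iter n (cover_sigma s d) (h, j) = (iter n s h, j + \sum_(k < n) d (iter k s h)).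
Proof.
elim: n => [|n IHn]; first by rewrite big_ord0 addr0.
by rewrite iterS IHn cover_sigmaE big_ord_recr /= addrA.
Qed.

Lemma cover_sigmaV_fst s d x : (((cover_sigma s d)^-1)%g x).1 = (s^-1)%g x.1.
Proof.
have := permKV (cover_sigma s d) x.
by case: (((cover_sigma s d)^-1)%g x) => h j; rewrite cover_sigmaE => <- /=; rewrite permK.
Qed.

Lemma cover_iotaE (io : T -> T) h j :
  cover_iota io (h, j) = (io h, j + (if io h == h then 1 else 0)).
Proof. by rewrite /cover_iota /=; case: eqP => [->|_]; rewrite ?addr0. Qed.

Lemma tperm_fibres (u v : T) (c j k : 'Z_2) : u != v -> j != k ->
  (tperm (u, j) (v, j + c) * tperm (u, k) (v, k + c))%g =
  cover_sigma (tperm u v) (fun x => if (x == u) || (x == v) then c else 0).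
Proof.
move=> neq_uv neq_jk; apply/permP => -[x i]; rewrite permM cover_sigmaE.
have neq_shift (a b : 'Z_2) : a != b -> (v, a + c) != (v, b + c).
  by move=> neq_ab; apply: pair_neq2; rewrite (inj_eq (addIr c)).
have neq_vu : v != u by rewrite eq_sym.
have [-> | neq_xu] := eqVneq x u.
  rewrite /= tpermL; case: (Z2_dichotomy i neq_jk) => ->.
    by rewrite tpermL tpermD //; [apply: pair_neq1 | apply: neq_shift; rewrite eq_sym].
  by rewrite [tperm (u, j) _ _]tpermD ?tpermL //; [exact: pair_neq2 | apply: pair_neq1].
have [-> | neq_xv] := eqVneq x v.
  rewrite orbT /= tpermR -(subrK c i); case: (Z2_dichotomy (i - c) neq_jk) => ->.
    by rewrite tpermR tpermD ?Z2_addrK //; [apply: pair_neq2; rewrite eq_sym | apply: pair_neq1].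
  by rewrite [tperm (u, j) _ _]tpermD ?tpermR ?Z2_addrK //; [apply: pair_neq1 | apply: neq_shift].
have neq_ux : u != x by rewrite eq_sym.
have neq_vx : v != x by rewrite eq_sym.
by rewrite addr0 !tpermD // !pair_neq1.
Qed.

Lemma cover_set_iter s d P n y :
  (iter n (cover_sigma s d) y \in cover_set P) = (iter n s y.1 \in P).
Proof. by case: y => h j; rewrite iter_cover_sigma !inE andbT. Qed.

Lemma is_max_sector_cover s d P h j r :
  is_max_sector (cover_sigma s d) (cover_set P) (h, j) r = is_max_sector s P h r.
Proof.
rewrite /is_max_sector /is_sector; congr (_ && _ && _).
- by apply: eq_forallb => i; rewrite !permX cover_set_iter.
- by rewrite !permX cover_set_iter.
- by rewrite !inE cover_sigmaV_fst andbT.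
Qed.

Lemma move_sigma_cover (io : T -> T) s d h j r :
  move_sigma (cover_iota io) (cover_sigma s d) (h, j) r =
  (tperm (iter r s h, j + \sum_(k < r) d (iter k s h))
         (io (iter r.+1 s h), j + \sum_(k < r.+1) d (iter k s h)
                               + (if io (iter r.+1 s h) == iter r.+1 s h then 1 else 0)%R)
   * cover_sigma s d
   * tperm (h, j) (iter r.+1 s h, j + \sum_(k < r.+1) d (iter k s h)))%g.
Proof. by rewrite move_sigmaE !iter_cover_sigma cover_iotaE. Qed.

Lemma max_sector_lens_cover s d P h j :
  max_sector_lens (cover_sigma s d) (cover_set P) (h, j) = max_sector_lens s P h.
Proof.
rewrite /max_sector_lens (eq_filter (fun r => is_max_sector_cover s d P h j r)).
rewrite card_prod card_ord muln2 -addnn iotaD filter_cat add0n.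
rewrite [X in _ ++ X](@eq_in_filter _ _ pred0) ?filter_pred0 ?cats0 // => r.
rewrite mem_iota => /andP[le_r _]; apply/negbTE/negP => /andP[/sector_len_lt_card].
by rewrite ltnNge le_r.
Qed.

Lemma max_sectors_cover s d P :
  max_sectors (cover_sigma s d) (cover_set P) =
  flatten (map fibre_sectors (max_sectors s P)).
Proof.
rewrite !max_sectorsE enum_prod /prod_enum enum_Z2.
elim: (enum T) => //= h hs IHhs.
rewrite IHhs map_cat flatten_cat !max_sector_lens_cover catA; congr (_ ++ _).
by have := size_max_sector_lens s P h; case: max_sector_lens => [|r []].
Qed.

End Cover.

Section OneMove.
Variables (T : finType) (iota : T -> T) (s : {perm T}) (d : T -> 'Z_2).
Variables (P : {set T}) (h : T) (r : nat).
Hypotheses (iotaK : involutive iota) (iotaP : iota_stable iota P).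
Hypotheses (sec_in : forall i, (i <= r)%N -> iter i s h \in P)
           (sec_out : iter r.+1 s h \notin P).
Local Open Scope ring_scope.

Local Notation D n := (\sum_(k < n) d (iter k s h)).
Local Notation l := (iter r s h).
Local Notation a := (iter r.+1 s h).
Local Notation b := (iota (iter r.+1 s h)).
Local Notation eps := (if iota (iter r.+1 s h) == iter r.+1 s h then 1 else 0 : 'Z_2).
Local Notation cs := (cover_sigma s d).
Local Notation ci := (cover_iota iota).
Local Notation cs0 := (move_sigma ci cs (h, 0) r).

Let b_notin : b \notin P. Proof. exact: iota_stable_notin. Qed.

Let sector_inj : {in [pred i | (i <= r.+1)%N] &, injective (fun i => iter i s h)}.
Proof. exact: (sector_iter_inj sec_in sec_out). Qed.

Let sector_neq_b i : (i <= r)%N -> iter i s h != b.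
Proof. by move=> le_ir; apply: contraNneq b_notin => <-; apply: sec_in. Qed.

Lemma iter_move_sigma_cover i : (i <= r.+1)%N -> iter i cs0 (h, 1) = iter i cs (h, 1).
Proof.
elim: i => [|i IHi lt_ir]; first by [].
rewrite [LHS]iterS IHi; last exact: ltnW.
rewrite iterS; apply: move_sigma_id; rewrite !iter_cover_sigma ?cover_sigmaE ?cover_iotaE.
- have [eq_l | ] := eqVneq (iter i s h) (iter r s h); last exact: pair_neq1.
  have -> : i = r := sector_inj (ltnW lt_ir) (leqnSn r) eq_l.
  by apply: pair_neq2; apply: Z2_shift_neq.
- by rewrite pair_neq1 ?sector_neq_b.
- by apply: pair_neq1; apply/eqP => /(sector_inj lt_ir (leq0n _)).
- have [eq_a | ] := eqVneq (iter i.+1 s h) (iter r.+1 s h); last exact: pair_neq1.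
  have -> : i = r by apply/eqP; rewrite -eqSS; apply/eqP/(sector_inj lt_ir (leqnn _) eq_a).
  by rewrite big_ord_recr /= -addrA; apply: pair_neq2; apply: Z2_shift_neq.
Qed.

(* The case distinctions in the definition of d_(h,r) come from this cocycle identity. *)
Lemma move_dE x :
  move_d iota s d h r x =
  (if (x == l) || (x == b) then d l + eps else 0) + d (tperm l b x)
  + (if (s (tperm l b x) == h) || (s (tperm l b x) == a) then D r.+1 else 0).
Proof.
have sums : \sum_(i < r.+1) d ((s ^+ i)%g h) = D r.+1.
  by apply: eq_bigr => i _; rewrite permX.
have sum_last : D r.+1 = D r + d l by rewrite big_ord_recr.
have eq_sh y : (s y == h) = (y == (s^-1)%g h).
  by rewrite -[in LHS](permKV s h) (inj_eq perm_inj).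
have eq_sa y : (s y == a) = (y == l) by exact: (inj_eq perm_inj).
have neq_lb : l != b := sector_neq_b (leqnn r).
rewrite /move_d !permX sums sum_last.
set c := D r; set e := (if b == a then _ else _); set p := (s^-1)%g h.
have [-> | neq_xb] := eqVneq x b.
  rewrite orbT tpermR eq_sa eqxx orbT.
  by case_Z2 c; case_Z2 (d l); case_Z2 e; apply/val_inj.
have [-> | neq_xl] := eqVneq x l.
  rewrite tpermL eq_sh eq_sa (eq_sym b l) (negbTE neq_lb) orbF /=.
  have [<- | neq_bp] := eqVneq b p.
    by case_Z2 c; case_Z2 (d l); case_Z2 e; case_Z2 (d b); apply/val_inj.
  by rewrite addr0 [RHS]addrC addrA.
rewrite tpermD 1?eq_sym // eq_sh eq_sa (negbTE neq_xl) orbF add0r.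
have [eq_xp | neq_xp] := eqVneq x p; last by rewrite addr0.
by move: neq_xb; rewrite eq_xp eq_sym => /negbTE ->.
Qed.

Lemma cover_move_sigma :
  cover_sigma (move_sigma iota s h r) (move_d iota s d h r) = move_sigma ci cs0 (h, 1) r.
Proof.
have shift j : j + D r.+1 + eps = j + D r + (d l + eps).
  by rewrite big_ord_recr /= !addrA.
have neq_ha : h != a by apply: contraNneq sec_out => <-; apply: (sec_in (leq0n r)).
rewrite [RHS]move_sigmaE (iter_move_sigma_cover (leqnSn r)).
rewrite (iter_move_sigma_cover (leqnn r.+1)).
rewrite !iter_cover_sigma cover_iotaE move_sigma_cover !shift !mulgA.
have neq01 : (0 : 'Z_2) != 1 by [].
rewrite (tperm_fibres _ (sector_neq_b (leqnn r)) (Z2_shift_neq _)) cover_sigmaM.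
rewrite -mulgA (tperm_fibres _ neq_ha neq01) cover_sigmaM -move_sigmaE.
by apply: eq_cover_sigma => x; rewrite move_dE permM.
Qed.

Lemma cover_move_m m :
  cover_m (move_m iota s m h r) =1
  move_m ci cs0 (move_m ci cs (cover_m m) (h, 0) r) (h, 1) r.
Proof.
have on_cs0 z : [exists i : 'I_r.+1, z == iter i cs0 (h, 1)] =
                [exists i : 'I_r.+1, z == (iter i s h, 1 + D i)].
  apply: eq_existsb => i; rewrite iter_move_sigma_cover ?iter_cover_sigma //.
  exact: ltnW (ltn_ord i).
have on_cs e z : [exists i : 'I_r.+1, z == iter i cs (h, e)] =
                 [exists i : 'I_r.+1, z == (iter i s h, e + D i)].
  by apply: eq_existsb => i; rewrite iter_cover_sigma.
have off_b e : [exists i : 'I_r.+1, (b, e) == (iter i s h, 0 + D i)] = false.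
  apply/existsP => -[i /eqP[eq_b _]].
  by move: (sector_neq_b (ltn_ord i)); rewrite eq_b eqxx.
move=> [x j]; rewrite cover_mE !move_mE on_cs0 (iter_move_sigma_cover (leqnn _)).
rewrite !iter_cover_sigma !cover_iotaE !on_cs off_b !cover_mE.
have /= <- := exists_fibres (fun i : 'I_r.+1 => iter i s h) (fun i => D i) x j.
by case: [exists i, _ == (_, 1 + _)].
Qed.

End OneMove.

Definition kauer_step (T : finType) (io : T -> T)
    (st : {perm T} * (T -> nat)) (hr : T * nat) :=
  (move_sigma io st.1 hr.1 hr.2, move_m io st.1 st.2 hr.1 hr.2).

Definition graded_kauer_step (T : finType) (io : T -> T)
    (st : {perm T} * (T -> nat) * (T -> 'Z_2)) (hr : T * nat) :=
  (move_sigma io st.1.1 hr.1 hr.2, move_m io st.1.1 st.1.2 hr.1 hr.2,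
   move_d io st.1.1 st.2 hr.1 hr.2).

Section Fold.
Variables (T : finType) (iota : T -> T) (s0 : {perm T}) (P : {set T}).
Hypotheses (iotaK : involutive iota) (iotaP : iota_stable iota P).

(* Sectors are enumerated for the initial permutation [s0] but moved in the current one. *)
Definition agrees_on_sector (s : {perm T}) (hr : T * nat) : Prop :=
  forall i, i <= hr.2 -> s (iter i s0 hr.1) = s0 (iter i s0 hr.1).

Lemma agrees_on_sector_iter s h r :
  agrees_on_sector s (h, r) -> forall i, i <= r.+1 -> iter i s h = iter i s0 h.
Proof.
move=> agr; elim=> [|i IHi lt_ir]; first by [].
rewrite !iterS IHi; last exact: ltnW.
exact: agr.
Qed.

Lemma move_sigma_agrees s h r h' r' :
  is_max_sector s0 P h r -> is_max_sector s0 P h' r' -> (h', r') != (h, r) ->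
  agrees_on_sector s (h, r) -> agrees_on_sector s (h', r') ->
  agrees_on_sector (move_sigma iota s h r) (h', r').
Proof.
move=> max_hr max_hr' neq_hr agr agr' i /= le_ir'.
have /is_max_sectorP[_ out0 prev_out] := max_hr.
have /is_max_sectorP[in0' _ _] := max_hr'.
have neq_last : iter i s0 h' != iter r s0 h.
  apply: contra_neq neq_hr => /(max_sectors_meet max_hr' max_hr le_ir' (leqnn r)).
  by case=> -> ->.
rewrite move_sigma_id; rewrite ?agr' ?(agrees_on_sector_iter agr (leqnn _))
  ?(agrees_on_sector_iter agr (leqnSn _)) //.
- by apply: contraNneq (iota_stable_notin iotaK iotaP out0) => <-; apply: in0'.
- by apply: contraNneq prev_out => <-; rewrite permK in0'.
- by rewrite (inj_eq perm_inj).
Qed.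

Lemma foldl_kauer_cover (L : seq (T * nat)) s m d cm :
  {in L, forall hr, is_max_sector s0 P hr.1 hr.2} -> uniq L ->
  {in L, forall hr, agrees_on_sector s hr} -> cm =1 cover_m m ->
  let G := foldl (graded_kauer_step iota) (s, m, d) L in
  let B := foldl (kauer_step (cover_iota iota)) (cover_sigma s d, cm)
                 (flatten (map fibre_sectors L)) in
  cover_sigma G.1.1 G.2 = B.1 /\ cover_m G.1.2 =1 B.2.
Proof.
elim: L s m d cm => [|[h r] L IHL] s m d cm maxL uniqL agL eq_cm /=.
  by split=> // x; rewrite eq_cm.
case/andP: uniqL => hr_notin uniqL.
have max_hr := maxL _ (mem_head _ _); have agr := agL _ (mem_head _ _).
have /is_max_sectorP[in0 out0 _] := max_hr.
have sec_in i : i <= r -> iter i s h \in P.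
  by move=> le_ir; rewrite (agrees_on_sector_iter agr (leqW le_ir)) in0.
have sec_out : iter r.+1 s h \notin P by rewrite (agrees_on_sector_iter agr (leqnn _)).
rewrite /kauer_step /graded_kauer_step /= -(cover_move_sigma d iotaK iotaP sec_in sec_out).
apply: IHL => // [hr hr_L | [h' r'] hr_L | x].
- by apply: maxL; rewrite inE hr_L orbT.
- have hr_hL : (h', r') \in (h, r) :: L by rewrite inE hr_L orbT.
  apply: move_sigma_agrees => //; [exact: (maxL _ hr_hL) | | exact: (agL _ hr_hL)].
  by apply: contraNneq hr_notin => <-.
- rewrite (cover_move_m d iotaK iotaP sec_in sec_out m x).
  by apply: eq_move_m => y; apply: eq_move_m.
Qed.

End Fold.

Theorem proposition3p18 (H : finType) (iota : H -> H) (sigma : {perm H})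
  (m : H -> nat) (d : H -> 'Z_2) (Hp : {set H}) :
  graded_skew_brauer iota sigma m d ->
  iota_stable iota Hp ->
  let G := gkauer iota Hp sigma m d in
  let B := kauer (cover_iota iota) (cover_set Hp)
             (cover_sigma sigma d) (cover_m m) in
  (forall x, cover_sigma G.1.1 G.2 x = B.1 x) /\
  (forall x, cover_m G.1.2 x = B.2 x).
Proof.
move=> [[iotaK _] _] iotaP G B.
have [eq_sigma eq_m] :=
  foldl_kauer_cover iotaK iotaP d (@mem_max_sectors _ sigma Hp) (max_sectors_uniq sigma Hp)
    (fun hr _ i _ => erefl) (frefl (cover_m m)).
rewrite /B /kauer max_sectors_cover; split=> [x | ]; [by rewrite -eq_sigma | exact: eq_m].
Qed.
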